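(* Fix $\ell\geq2$, let $A=\ell\times\omega$, and fix a recursive bijection $\psi:(\ell-1)\times\omega\times\omega\to\omega$. For $\alpha\in\{0,1\}^\omega$ define $S_\alpha$ on $A$ by: $S_\alpha(a,b)$ holds iff $a=(i,n)$, $b=(i+1,m)$ for some $i<\ell-1$ with $\alpha_{\psi(i,n,m)}=1$. If $\alpha$ is a Kolmogorov–Chaitin complex string, then the ranked diagram $(A,S_\alpha)$, with levels $L_j=\{j\}\times\omega$, is $\ell$-generic, i.e. $\langle A,S_\alpha,\{0\}\times\omega,\ldots,\{\ell-1\}\times\omega\rangle$ is a model of $T_\ell$.
   Context: The signature has unary relations $L_0,\ldots,L_{\ell-1}$ and binary $S$. The theory $T_\ell$: (i) every $x$ satisfies some $L_j(x)$; (ii) no $x$ satisfies $L_i(x)\wedge L_j(x)$ for $i<j$; (iii) $S(x,y)$ and $L_i(x)$ with $i\le\ell-2$ imply $L_{i+1}(y)$; (iv) for each $i<\ell$ and all finite $X,Y\subseteq L_{i+1}$ with $X\cap Y=\emptyset$, $Z\subseteq L_i$, $X',Y'\subseteq L_{i-1}$ with $X'\cap Y'=\emptyset$ ($L_{-1},L_\ell$ read as empty), there is $z\in L_i\setminus Z$ with $S(z,x)$ for $x\in X$, $S(x',z)$ for $x'\in X'$, $\neg S(z,y)$ for $y\in Y$, $\neg S(y',z)$ for $y'\in Y'$. For $\alpha\in\{0,1\}^\omega$, $\overline{\alpha}(n)=\alpha_0\cdots\alpha_{n-1}$. Let $H(s)$ be the prefix-free Kolmogorov complexity of a binary word $s$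 relative to a fixed universal prefix algorithm. $\alpha$ is Kolmogorov–Chaitin complex if $\exists m\,\forall n\;H(\overline{\alpha}(n))\ge n-m$. *)

From mathcomp Require Import all_boot.
From Stdlib Require Import List.
Set Implicit Arguments. Unset Strict Implicit. Unset Printing Implicit Defensive.

(* Untyped syntax acting on argument lists; every term denotes a partial
   recursive function and every partial recursive function is denoted. *)
Inductive term : Type :=
| Zero
| Succ
| Proj (i : nat)
| Comp (f : term) (gs : list term)
| Rec (f g : term)
| Mu (f : term).

Inductive eval : term -> list nat -> nat -> Prop :=
| eZero xs : eval Zero xs 0
| eSucc x xs : eval Succ (x :: xs) x.+1
| eProj i xs : eval (Proj i) xs (List.nth i xs 0)
| eComp f gs xs ys y : evals gs xs ys -> eval f ys y -> eval (Comp f gs) xs y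
| eRec0 f g xs y : eval f xs y -> eval (Rec f g) (0 :: xs) y
| eRecS f g n xs r y :
    eval (Rec f g) (n :: xs) r -> eval g (n :: r :: xs) y ->
    eval (Rec f g) (n.+1 :: xs) y
| eMu f xs n :
    eval f (n :: xs) 0 ->
    (forall m, m < n -> exists k, eval f (m :: xs) k.+1) ->
    eval (Mu f) xs n
with evals : list term -> list nat -> list nat -> Prop :=
| esNil xs : evals nil xs nil
| esCons g gs xs y ys : eval g xs y -> evals gs xs ys -> evals (g :: gs) xs (y :: ys).

(* bijective coding of binary words by naturals *)
Fixpoint code (s : list bool) : nat :=
  match s with
  | nil => 0
  | b :: s' => (code s').*2 + (if b then 2 else 1)
  end.

Definition runs (t : term) (p s : list bool) : Prop := eval t [:: code p] (code s).

Definition prefix_free (t : term) : Prop :=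
  forall p q s s', runs t p s -> runs t q s' -> (exists r, q = p ++ r) -> p = q.

Definition universal_prefix (U : term) : Prop :=
  prefix_free U /\
  forall M, prefix_free M ->
    exists rho : list bool, forall p s, runs M p s <-> runs U (rho ++ p) s.

(* "H_U(s) >= k", H_U(s) = min { |p| : U(p) = s } *)
Definition H_ge (U : term) (s : list bool) (k : nat) : Prop :=
  forall p, runs U p s -> k <= size p.

Definition prefix (alpha : nat -> bool) (n : nat) : list bool :=
  List.map alpha (List.seq 0 n).

Definition KC_complex (U : term) (alpha : nat -> bool) : Prop :=
  exists m, forall n, H_ge U (prefix alpha n) (n - m).

(* L j x : x in level L_j (only used for j < l) *)

Definition below {A : Type} (L : nat -> A -> Prop) (i : nat) (x : A) : Prop :=
  match i with 0 => False | i'.+1 => L i' x end.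
Definition above {A : Type} (l : nat) (L : nat -> A -> Prop) (i : nat) (x : A) : Prop :=
  i.+1 < l /\ L i.+1 x.

Definition disjoint_l {A : Type} (X Y : list A) : Prop :=
  forall x, List.In x X -> ~ List.In x Y.

Definition model_T (l : nat) (A : Type) (L : nat -> A -> Prop) (S : A -> A -> Prop) : Prop :=
  (forall x, exists j, j < l /\ L j x) /\
  (forall x i j, i < j -> j < l -> ~ (L i x /\ L j x)) /\
  (forall x y i, S x y -> L i x -> i <= l - 2 -> L i.+1 y) /\
  (forall i, i < l ->
     forall X Y Z X' Y' : list A,
       (forall x, List.In x X -> above l L i x) ->
       (forall x, List.In x Y -> above l L i x) ->
       disjoint_l X Y ->
       (forall x, List.In x Z -> L i x) ->
       (forall x, List.In x X' -> below L i x) ->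
       (forall x, List.In x Y' -> below L i x) ->
       disjoint_l X' Y' ->
       exists z, L i z /\ ~ List.In z Z /\
         (forall x, List.In x X -> S z x) /\
         (forall x, List.In x X' -> S x z) /\
         (forall y, List.In y Y -> ~ S z y) /\
         (forall y, List.In y Y' -> ~ S y z)).

Definition A_l (l : nat) : Type := ('I_l * nat)%type.

Definition level (l : nat) (j : nat) (a : A_l l) : Prop := nat_of_ord a.1 = j.

Definition S_alpha (l : nat) (psi : nat -> nat -> nat -> nat) (alpha : nat -> bool)
  (a b : A_l l) : Prop :=
  exists i, i < l.-1 /\ nat_of_ord a.1 = i /\ nat_of_ord b.1 = i.+1 /\
            alpha (psi i a.2 b.2) = true.

Definition recursive_bijection3 (l : nat) (psi : nat -> nat -> nat -> nat) : Prop :=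
  (exists t, forall i n m, i < l.-1 -> eval t [:: i; n; m] (psi i n m)) /\
  (forall i n m i' n' m', i < l.-1 -> i' < l.-1 ->
       psi i n m = psi i' n' m' -> [/\ i = i', n = n' & m = m']) /\
  (forall k, exists i n m, i < l.-1 /\ psi i n m = k).

From Pilot Require Import Defs.
From mathcomp Require Import all_boot zify.
From Stdlib Require Import Classical.
Set Implicit Arguments. Unset Strict Implicit. Unset Printing Implicit Defensive.

(** Suppose an instance of axiom (iv) fails at level [i] for finite [X, Y, Z, X', Y'].
    Then every point [(i, n)] with [n] beyond [Z] violates one of finitely many requirements:
    the [k] bits of [alpha] at the positions [psi (i, n, m)] and [psi (i - 1, m, n)] named by
    [X, Y, X', Y'] never spell out the required pattern.  These blocks are pairwise disjoint
    and computably located, so [alpha] is compressible: a prefix of length [L] is described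
    by the first [G] blocks written in base [2^k - 1] followed by the bits outside them
    verbatim.  Choosing [G = (2^k - 1)(2^(2j+2) - 1)], Bernoulli's inequality
    [(2^k - 1)^G 2^(2j+2) <= 2^(kG)] yields a self-delimiting program of length [L - j - 1]
    for [alpha|L].  Simulated by the universal machine with a prefix of length [|rho|] and
    [j = |rho| + m], this gives [H(alpha|L) < L - m] for every [m]. *)

(** * Computable functions *)

Definition arg (i : nat) (xs : list nat) : nat := List.nth i xs 0.

Definition computable (f : list nat -> nat) : Prop :=
  exists t, forall xs, eval t xs (f xs).

Definition computable_list (fs : list (list nat -> nat)) : Prop :=
  exists ts, forall xs, evals ts xs [seq f xs | f <- fs].

Lemma computable_ext f g : f =1 g -> computable f -> computable g.
Proof. by move=> eq_fg [t Ht]; exists t => xs; rewrite -eq_fg. Qed.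

Lemma computable_nil : computable_list [::].
Proof. by exists [::] => xs; constructor. Qed.

Lemma computable_cons f fs :
  computable f -> computable_list fs -> computable_list (f :: fs).
Proof. by move=> [t Ht] [ts Hts]; exists (t :: ts) => xs; constructor. Qed.

Lemma computable_comp f gs : computable f -> computable_list gs ->
  computable (fun xs => f [seq g xs | g <- gs]).
Proof. by move=> [t Ht] [ts Hts]; exists (Comp t ts) => xs; econstructor. Qed.

Lemma computable_arg i : computable (arg i).
Proof. by exists (Proj i) => xs; apply: eProj. Qed.

Lemma computable_succ f : computable f -> computable (fun xs => (f xs).+1).
Proof.
move=> [t Ht]; exists (Comp Succ [:: t]) => xs.
by econstructor; [constructor; [apply: Ht | constructor] | constructor].
Qed.

Lemma computable_const c : computable (fun _ => c).
Proof.
elim: c => [|c IHc]; first by exists Zero => xs; constructor.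
exact: computable_succ.
Qed.

Lemma computable_primrec (h : nat -> list nat -> nat) b s n ps :
  (forall qs, h 0 qs = b qs) -> (forall m qs, h m.+1 qs = s [:: m, h m qs & qs]) ->
  computable b -> computable s -> computable n -> computable_list ps ->
  computable (fun xs => h (n xs) [seq p xs | p <- ps]).
Proof.
move=> h0 hS [tb Hb] [ts Hs] [tn Hn] [tp Hp].
exists (Comp (Rec tb ts) (tn :: tp)) => xs.
econstructor; first by constructor; [apply: Hn | apply: Hp].
elim: (n xs) => [|m IHm]; first by rewrite h0; constructor.
by rewrite hS; econstructor; [apply: IHm | apply: Hs].
Qed.

Lemma computable_comp1 f g :
  computable (fun xs => f (arg 0 xs)) -> computable g -> computable (fun xs => f (g xs)).
Proof.
move=> Hf Hg; have := computable_comp Hf (computable_cons Hg computable_nil).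
exact: computable_ext.
Qed.

Lemma computable_comp2 f g1 g2 :
  computable (fun xs => f (arg 0 xs) (arg 1 xs)) -> computable g1 -> computable g2 ->
  computable (fun xs => f (g1 xs) (g2 xs)).
Proof.
move=> Hf H1 H2.
have := computable_comp Hf (computable_cons H1 (computable_cons H2 computable_nil)).
exact: computable_ext.
Qed.

Lemma computable_comp3 f g1 g2 g3 :
  computable (fun xs => f (arg 0 xs) (arg 1 xs) (arg 2 xs)) ->
  computable g1 -> computable g2 -> computable g3 ->
  computable (fun xs => f (g1 xs) (g2 xs) (g3 xs)).
Proof.
move=> Hf H1 H2 H3.
have := computable_comp Hf
  (computable_cons H1 (computable_cons H2 (computable_cons H3 computable_nil))).
exact: computable_ext.
Qed.

Lemma computable_primrec0 (h : nat -> nat) b s :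
  h 0 = b -> (forall n, h n.+1 = s n (h n)) ->
  computable (fun xs => s (arg 0 xs) (arg 1 xs)) -> computable (fun xs => h (arg 0 xs)).
Proof.
move=> h0 hS Hs.
have := @computable_primrec (fun n _ => h n) (fun _ => b) (fun ys => s (arg 0 ys) (arg 1 ys))
  (arg 0) [::] (fun _ => h0) (fun n _ => hS n) (computable_const b) Hs (computable_arg 0)
  computable_nil.
exact: computable_ext.
Qed.

Lemma computable_primrec1 (h : nat -> nat -> nat) b s :
  (forall p, h 0 p = b p) -> (forall n p, h n.+1 p = s n (h n p) p) ->
  computable (fun xs => b (arg 0 xs)) ->
  computable (fun xs => s (arg 0 xs) (arg 1 xs) (arg 2 xs)) ->
  computable (fun xs => h (arg 0 xs) (arg 1 xs)).
Proof.
move=> h0 hS Hb Hs.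
have := @computable_primrec (fun n ps => h n (arg 0 ps)) (fun ps => b (arg 0 ps))
  (fun ys => s (arg 0 ys) (arg 1 ys) (arg 2 ys)) (arg 0) [:: arg 1]
  (fun ps => h0 _) (fun n ps => hS n _) Hb Hs (computable_arg 0)
  (computable_cons (computable_arg 1) computable_nil).
exact: computable_ext.
Qed.

Lemma computable_primrec2 (h : nat -> nat -> nat -> nat) b s :
  (forall p q, h 0 p q = b p q) -> (forall n p q, h n.+1 p q = s n (h n p q) p q) ->
  computable (fun xs => b (arg 0 xs) (arg 1 xs)) ->
  computable (fun xs => s (arg 0 xs) (arg 1 xs) (arg 2 xs) (arg 3 xs)) ->
  computable (fun xs => h (arg 0 xs) (arg 1 xs) (arg 2 xs)).
Proof.
move=> h0 hS Hb Hs.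
have := @computable_primrec (fun n ps => h n (arg 0 ps) (arg 1 ps))
  (fun ps => b (arg 0 ps) (arg 1 ps)) (fun ys => s (arg 0 ys) (arg 1 ys) (arg 2 ys) (arg 3 ys))
  (arg 0) [:: arg 1; arg 2] (fun ps => h0 _ _) (fun n ps => hS n _ _) Hb Hs
  (computable_arg 0)
  (computable_cons (computable_arg 1) (computable_cons (computable_arg 2) computable_nil)).
exact: computable_ext.
Qed.

Lemma computable_add f g :
  computable f -> computable g -> computable (fun xs => f xs + g xs).
Proof.
apply: computable_comp2.
apply: (@computable_primrec1 addn id (fun _ r _ => r.+1)) => //.
  exact: computable_arg.
exact: computable_succ (computable_arg 1).
Qed.

Lemma computable_mul f g :
  computable f -> computable g -> computable (fun xs => f xs * g xs).
Proof.
apply: computable_comp2.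
apply: (@computable_primrec1 muln (fun _ => 0) (fun _ r p => p + r)) => //.
- exact: computable_const.
- exact: computable_add (computable_arg 2) (computable_arg 1).
Qed.

Lemma computable_pred f : computable f -> computable (fun xs => (f xs).-1).
Proof.
apply: computable_comp1.
by apply: (@computable_primrec0 predn 0 (fun n _ => n)) => //; apply: computable_arg.
Qed.

Lemma computable_sub f g :
  computable f -> computable g -> computable (fun xs => f xs - g xs).
Proof.
move=> Hf Hg; apply: (@computable_comp2 (fun x y => y - x) g f) => //.
apply: (@computable_primrec1 (fun n p => p - n) id (fun _ r _ => r.-1)).
- exact: subn0.
- by move=> n p; rewrite subnS.
- exact: computable_arg.
- exact: computable_pred (computable_arg 1).
Qed.

Lemma computable_exp f g :
  computable f -> computable g -> computable (fun xs => f xs ^ g xs).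
Proof.
move=> Hf Hg; apply: (@computable_comp2 (fun x y => y ^ x) g f) => //.
apply: (@computable_primrec1 (fun n p => p ^ n) (fun _ => 1) (fun _ r p => p * r)).
- by move=> p; rewrite expn0.
- by move=> n p; rewrite expnS.
- exact: computable_const.
- exact: computable_mul (computable_arg 2) (computable_arg 1).
Qed.

Lemma computable_ifz f g h : computable f -> computable g -> computable h ->
  computable (fun xs => if f xs is 0 then h xs else g xs).
Proof.
move=> Hf Hg Hh; pose ifz (c x y : nat) := if c is 0 then y else x.
have Hifz : computable (fun xs => ifz (arg 0 xs) (arg 1 xs) (arg 2 xs)).
  by apply: (@computable_primrec2 ifz (fun _ y => y) (fun _ _ x _ => x)) => //;
    apply: computable_arg.
exact: computable_comp3 Hifz Hf Hg Hh.
Qed.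

Lemma computable_if (B : list nat -> bool) f g :
  computable (fun xs => B xs) -> computable f -> computable g ->
  computable (fun xs => if B xs then f xs else g xs).
Proof.
move=> HB Hf Hg; apply: computable_ext (computable_ifz HB Hf Hg) => xs.
by case: (B xs).
Qed.

Lemma computable_ltn f g :
  computable f -> computable g -> computable (fun xs => f xs < g xs).
Proof.
move=> Hf Hg.
have := computable_ifz (computable_sub Hg Hf) (computable_const 1) (computable_const 0).
by apply: computable_ext => xs; rewrite -subn_gt0; case: (g xs - f xs).
Qed.

Lemma computable_leq f g :
  computable f -> computable g -> computable (fun xs => f xs <= g xs).
Proof. by move=> Hf /computable_succ Hg; apply: computable_ext (computable_ltn Hf Hg). Qed.

Lemma computable_eqn f g :
  computable f -> computable g -> computable (fun xs => f xs == g xs).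
Proof.
move=> Hf Hg.
have Hd := computable_add (computable_sub Hf Hg) (computable_sub Hg Hf).
apply: computable_ext (computable_ifz Hd (computable_const 0) (computable_const 1)) => xs.
case: eqP => [->|neq]; first by rewrite subnn.
by case E: (f xs - g xs + (g xs - f xs)) => //; lia.
Qed.

Lemma computable_andb (B C : list nat -> bool) :
  computable (fun xs => B xs) -> computable (fun xs => C xs) ->
  computable (fun xs => B xs && C xs).
Proof.
move=> HB HC; apply: computable_ext (computable_mul HB HC) => xs.
by case: (B xs); case: (C xs).
Qed.

Lemma computable_negb (B : list nat -> bool) :
  computable (fun xs => B xs) -> computable (fun xs => ~~ B xs).
Proof.
move=> HB; apply: computable_ext (computable_sub (computable_const 1) HB) => xs.
by case: (B xs).
Qed.

Lemma modSn_step m d : m.+1 %% d = if (m %% d).+1 == d then 0 else (m %% d).+1.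
Proof.
case: d => [|d]; first by rewrite !modn0.
rewrite {1}(divn_eq m d.+1) -addnS; case: eqP => [->|neq].
  by rewrite -mulSnr modnMl.
rewrite modnMDl modn_small //.
by move: neq (ltn_pmod m (ltn0Sn d)); set r := m %% d.+1; lia.
Qed.

Lemma divSn_step m d : m.+1 %/ d = m %/ d + ((m %% d).+1 == d).
Proof.
case: d => [|d]; first by rewrite !divn0 modn0.
rewrite {1}(divn_eq m d.+1) -addnS; case: eqP => [->|neq] /=.
  by rewrite -mulSnr mulnK // addn1.
rewrite divnMDl // (@divn_small (m %% d.+1).+1) ?addn0 //.
by move: neq (ltn_pmod m (ltn0Sn d)); set r := m %% d.+1; lia.
Qed.

Lemma computable_mod f g :
  computable f -> computable g -> computable (fun xs => f xs %% g xs).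
Proof.
apply: computable_comp2.
apply: (@computable_primrec1 modn (fun _ => 0)
  (fun _ r d => if r.+1 == d then 0 else r.+1)).
- exact: mod0n.
- by move=> n d; rewrite modSn_step.
- exact: computable_const.
- apply: computable_if; first apply: computable_eqn; try apply: computable_succ;
    by [apply: computable_arg | apply: computable_const].
Qed.

Lemma computable_div f g :
  computable f -> computable g -> computable (fun xs => f xs %/ g xs).
Proof.
apply: computable_comp2.
apply: (@computable_primrec1 divn (fun _ => 0)
  (fun n r d => r + ((n %% d).+1 == d))).
- exact: div0n.
- by move=> n d; rewrite divSn_step.
- exact: computable_const.
- apply: computable_add; first exact: computable_arg.
  apply: computable_eqn; last exact: computable_arg.
  by apply/computable_succ/computable_mod; apply: computable_arg.
Qed.

Lemma computable_odd f : computable f -> computable (fun xs => odd (f xs)).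
Proof.
move=> Hf; apply: computable_ext (computable_mod Hf (computable_const 2)) => xs.
by rewrite modn2.
Qed.

Lemma computable_sum (F : nat -> nat -> nat) g h :
  computable (fun xs => F (arg 0 xs) (arg 1 xs)) -> computable g -> computable h ->
  computable (fun xs => \sum_(z < g xs) F z (h xs)).
Proof.
move=> HF; apply: (@computable_comp2 (fun n y => \sum_(z < n) F z y)).
apply: (@computable_primrec1 (fun n y => \sum_(z < n) F z y) (fun _ => 0)
  (fun n r y => r + F n y)).
- by move=> y; rewrite big_ord0.
- by move=> n y; rewrite big_ord_recr.
- exact: computable_const.
- apply: computable_add; first exact: computable_arg.
  exact: computable_comp2 HF (computable_arg 0) (computable_arg 2).
Qed.

Lemma find_iotaS (p : pred nat) n :
  find p (iota 0 n.+1) =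
    if find p (iota 0 n) < n then find p (iota 0 n) else if p n then n else n.+1.
Proof.
rewrite -addn1 iotaD find_cat.
have := has_find p (iota 0 n); rewrite size_iota => <- /=.
by case: (has p _) => //; case: (p n); rewrite ?addn0 ?addn1.
Qed.

Lemma computable_find (P : nat -> nat -> bool) g h :
  computable (fun xs => P (arg 0 xs) (arg 1 xs)) -> computable g -> computable h ->
  computable (fun xs => find (P ^~ (h xs)) (iota 0 (g xs))).
Proof.
move=> HP; apply: (@computable_comp2 (fun n y => find (P ^~ y) (iota 0 n))).
apply: (@computable_primrec1 (fun n y => find (P ^~ y) (iota 0 n)) (fun _ => 0)
  (fun n r y => if r < n then r else if P n y then n else n.+1)) => //.
- by move=> n y; rewrite find_iotaS.
- exact: computable_const.
- apply: computable_if; first by apply: computable_ltn; apply: computable_arg.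
    exact: computable_arg.
  apply: computable_if; last by apply: computable_succ; apply: computable_arg.
    exact: (@computable_comp2 (fun x y => P x y) _ _ HP (computable_arg 0) (computable_arg 2)).
  exact: computable_arg.
Qed.

Lemma computable_nth_map (T : eqType) (g : T -> nat -> nat) (ss : seq T) :
  (forall s, s \in ss -> computable (fun xs => g s (arg 0 xs))) ->
  computable (fun xs => nth 0 [seq g s (arg 0 xs) | s <- ss] (arg 1 xs)).
Proof.
elim: ss => [|s ss IHss] Hg.
  by apply: computable_ext (computable_const 0) => xs; rewrite nth_nil.
have Hs := Hg s (mem_head s ss).
have {IHss} Hss := IHss (fun s' s'_in => Hg s' (mem_behead (s := s :: ss) s'_in)).
have Hss' := @computable_comp2 (fun u v => nth 0 [seq g s u | s <- ss] v) _ _ Hss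
  (computable_arg 0) (computable_pred (computable_arg 1)).
apply: computable_ext (computable_if (computable_eqn (computable_arg 1) (computable_const 0))
  Hs Hss') => xs.
by case: (arg 1 xs).
Qed.

Ltac computable_extra := fail.
Ltac computable_auto := repeat first
  [ exact: computable_const | exact: computable_arg | eassumption
  | apply: computable_mod | apply: computable_div | apply: computable_exp
  | apply: computable_mul | apply: computable_add | apply: computable_sub
  | apply: computable_odd | apply: computable_eqn | apply: computable_ltn
  | apply: computable_leq | apply: computable_andb | apply: computable_negb
  | computable_extra | apply: computable_succ | apply: computable_pred
  | apply: computable_if ].

(** * Binary codes and self-delimiting programs *)

(* [code (b :: s) = 2 * code s + 1 + b], so dropping the head is [x |-> (x - 1) / 2]. *)
Definition code_tail (x : nat) : nat := x.-1 %/ 2.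
Definition code_drop (y x : nat) : nat := iter y code_tail x.

Lemma code_tailE s : code_tail (code s) = code (behead s).
Proof. by case: s => [|[] s] //=; rewrite /code_tail -addnn; lia. Qed.

Lemma code_dropE y s : code_drop y (code s) = code (drop y s).
Proof.
elim: y s => [|y IHy] s; first by rewrite drop0.
by rewrite /code_drop iterSr code_tailE -/(code_drop _ _) IHy; case: s.
Qed.

Lemma odd_code b s : odd (code (b :: s)) = ~~ b.
Proof. by rewrite /= oddD odd_double; case: b. Qed.

Lemma code_bounds s : 2 ^ size s - 1 <= code s < 2 ^ (size s).+1 - 1.
Proof.
elim: s => [|b s] //=; rewrite !expnS.
have : 0 < 2 ^ size s by rewrite expn_gt0.
by case: b; rewrite -addnn; lia.
Qed.

Lemma size_code_le s : size s <= code s.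
Proof. by have := code_bounds s; have := ltn_expl (size s) (ltnSn 1); lia. Qed.

Lemma code_onto_size F n : n < 2 ^ F -> exists2 q, size q = F & code q = 2 ^ F - 1 + n.
Proof.
elim: F n => [|F IHF] n lt_n.
  by exists [::]; move: lt_n; rewrite expn0 //; case: n.
have [q size_q code_q] : exists2 q, size q = F & code q = 2 ^ F - 1 + n./2.
  by apply: IHF; move: lt_n; rewrite expnS -divn2 ltn_divLR //; lia.
exists (odd n :: q); first by rewrite /= size_q.
rewrite /= code_q expnS; have := odd_double_half n; have : 0 < 2 ^ F by rewrite expn_gt0.
by case: (odd n) => /=; rewrite -!addnn; lia.
Qed.

Lemma size_code_eq q F : 2 ^ F - 1 <= code q < 2 ^ F.+1 - 1 -> size q = F.
Proof.
move=> /andP[lo hi]; have /andP[lo' hi'] := code_bounds q.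
case: (ltngtP (size q) F) => // cmp.
- have : 2 ^ (size q).+1 <= 2 ^ F by rewrite leq_exp2l.
  have : 0 < 2 ^ (size q).+1 by rewrite expn_gt0.
  lia.
- have : 2 ^ F.+1 <= 2 ^ size q by rewrite leq_exp2l.
  have : 0 < 2 ^ F.+1 by rewrite expn_gt0.
  lia.
Qed.

Lemma computable_code_drop f g :
  computable f -> computable g -> computable (fun xs => code_drop (f xs) (g xs)).
Proof.
apply: computable_comp2.
apply: (@computable_primrec1 code_drop id (fun _ r _ => code_tail r)) => //.
- exact: computable_arg.
- by rewrite /code_tail; computable_auto.
Qed.

Lemma drop_nseq_cat (T : Type) (b : T) j y r :
  y <= j -> drop y (nseq j b ++ r) = nseq (j - y) b ++ r.
Proof.
rewrite drop_cat size_nseq drop_nseq leq_eqVlt => /orP[/eqP->|->] //.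
by rewrite ltnn subnn drop0.
Qed.

Section SelfDelimiting.
Variable flen : nat -> nat.

Definition header_len (x : nat) : nat := find (fun y => odd (code_drop y x)) (iota 0 x.+1).
Definition payload_code (x : nat) : nat := code_drop (header_len x).+1 x.
Definition well_formed (x : nat) : bool :=
  [&& odd (code_drop (header_len x) x), 2 ^ flen (header_len x) - 1 <= payload_code x
    & payload_code x < 2 ^ (flen (header_len x)).+1 - 1].

(* The program [1^j 0 q]; [well_formed] recognises these codes with [size q = flen j]. *)
Definition delimited (j : nat) (q : list bool) : list bool := nseq j true ++ false :: q.

Lemma header_len_delimited j q : header_len (code (delimited j q)) = j.
Proof.
have le_j : j <= code (delimited j q).
  by have := size_code_le (delimited j q); rewrite size_cat size_nseq /=; lia.
rewrite /header_len -(subnKC (leqW le_j)) iotaD find_cat size_iota.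
have -> : has (fun y => odd (code_drop y (code (delimited j q)))) (iota 0 j) = false.
  apply/hasPn => y; rewrite mem_iota add0n => /andP[_ lt_y].
  rewrite code_dropE drop_nseq_cat 1?ltnW //.
  have -> : nseq (j - y) true = true :: nseq (j - y.+1) true by rewrite -(subnSK lt_y).
  by rewrite cat_cons odd_code.
rewrite add0n (subSn le_j) /= code_dropE /delimited drop_nseq_cat // subnn.
by rewrite odd_code addn0.
Qed.

Lemma payload_code_delimited j q : payload_code (code (delimited j q)) = code q.
Proof.
rewrite /payload_code header_len_delimited code_dropE /delimited -add1n -drop_drop.
by rewrite drop_nseq_cat // subnn /= drop0.
Qed.

Lemma well_formed_delimited j q : size q = flen j -> well_formed (code (delimited j q)).
Proof.
move=> size_q; rewrite /well_formed payload_code_delimited header_len_delimited.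
by rewrite code_dropE /delimited drop_nseq_cat // subnn odd_code -size_q code_bounds.
Qed.

Lemma well_formedP p :
  well_formed (code p) -> exists j q, p = delimited j q /\ size q = flen j.
Proof.
rewrite /well_formed /payload_code; set j := header_len (code p).
rewrite code_dropE; case E: (drop j p) => [|b q] //.
rewrite odd_code => /and3P[/negPf b_false lo hi]; subst b.
have lt_j : j < size p by have := size_drop j p; rewrite E /=; lia.
have take_j : take j p = nseq j true.
  apply/(@eq_from_nth _ false); rewrite size_take lt_j ?size_nseq // => y lt_y.
  rewrite nth_take // nth_nseq lt_y.
  have := before_find 0 lt_y.
  rewrite nth_iota; last by have := size_code_le p; lia.
  rewrite add0n code_dropE (drop_nth false); last exact: ltn_trans lt_j.
  by rewrite odd_code => /negbFE.
exists j, q; split; first by rewrite -[p](cat_take_drop j) take_j E.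
apply: size_code_eq; move: lo hi.
by rewrite code_dropE -[j.+1]add1n -drop_drop E /= drop0 => -> ->.
Qed.

Lemma well_formed_prefix_free p r :
  well_formed (code p) -> well_formed (code (p ++ r)) -> r = [::].
Proof.
move=> /well_formedP[j [q [-> size_q]]] /well_formedP[j' [q' [E size_q']]].
have ej : j = j'.
  move: (congr1 (index false) E); rewrite /delimited -catA /=.
  by rewrite !index_cat !mem_nseq !andbF !size_nseq /= !addn0.
subst j'; move: E; rewrite /delimited -catA => /eqP; rewrite eqseq_cat // eqxx /=.
rewrite eqseq_cons /= => /eqP/(congr1 size); rewrite size_cat size_q size_q' => eq_size.
by apply: size0nil; apply/eqP; rewrite -(eqn_add2l (flen j)) addn0 eq_size.
Qed.

Hypothesis computable_flen : computable (fun xs => flen (arg 0 xs)).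

Lemma computable_header_len f : computable f -> computable (fun xs => header_len (f xs)).
Proof.
move=> Hf; apply: (@computable_find (fun y x => odd (code_drop y x))) => //.
  by apply/computable_odd/computable_code_drop; apply: computable_arg.
exact: computable_succ.
Qed.

Lemma computable_payload_code f : computable f -> computable (fun xs => payload_code (f xs)).
Proof.
move=> Hf; apply: computable_code_drop => //.
exact/computable_succ/computable_header_len.
Qed.

Lemma computable_well_formed f : computable f -> computable (fun xs => well_formed (f xs)).
Proof.
move=> Hf; have Hh := computable_header_len Hf; have Hp := computable_payload_code Hf.
have Hl := computable_comp1 computable_flen Hh.
by rewrite /well_formed; computable_auto; apply: computable_code_drop.
Qed.
End SelfDelimiting.

(** * Machines *)

Lemma eval_Comp_inv f gs xs y :
  eval (Comp f gs) xs y -> exists2 ys, evals gs xs ys & eval f ys y.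
Proof. by move=> E; inversion E; subst; exists ys. Qed.

Lemma evals_cons_inv g gs xs ys : evals (g :: gs) xs ys ->
  exists y ys', [/\ ys = y :: ys', eval g xs y & evals gs xs ys'].
Proof. by move=> E; inversion E; subst; exists y, ys0. Qed.

Lemma evals_nil_inv xs ys : evals [::] xs ys -> ys = [::].
Proof. by move=> E; inversion E. Qed.

Lemma eval_Mu_inv f xs n : eval (Mu f) xs n ->
  eval f (n :: xs) 0 /\ (forall m, m < n -> exists c, eval f (m :: xs) c.+1).
Proof. by move=> E; inversion E; subst. Qed.

Lemma eval_Proj_inv i xs y : eval (Proj i) xs y -> y = List.nth i xs 0.
Proof. by move=> E; inversion E. Qed.

Fixpoint eval_functional t xs y (D : eval t xs y) {struct D} :
  forall y', eval t xs y' -> y = y'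
with evals_functional gs xs ys (D : evals gs xs ys) {struct D} :
  forall ys', evals gs xs ys' -> ys = ys'.
Proof.
- destruct D as [xs|x xs|i xs|f gs xs ys y Hgs Hf|f g xs y Hf|f g n xs r y Hr Hg|f xs n Hf Hlt];
    move=> y' D'; inversion D'; subst => //.
  + match goal with H : evals gs xs _ |- _ => have E := evals_functional _ _ _ Hgs _ H end.
    subst; match goal with H : eval f _ y' |- _ => exact: eval_functional _ _ _ Hf _ H end.
  + match goal with H : eval f _ y' |- _ => exact: eval_functional _ _ _ Hf _ H end.
  + match goal with H : eval (Rec f g) _ _ |- _ => have E := eval_functional _ _ _ Hr _ H end.
    subst; match goal with H : eval g _ y' |- _ => exact: eval_functional _ _ _ Hg _ H end.
  + have [Hf' Hlt'] := eval_Mu_inv D'.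
    case: (ltngtP n y') => // [lt_ny|lt_yn].
    * destruct (Hlt' n lt_ny) as [c Hc].
      by have := eval_functional _ _ _ Hf _ Hc.
    * destruct (Hlt y' lt_yn) as [c Hc].
      by have := eval_functional _ _ _ Hc _ Hf'.
- destruct D as [xs|g gs xs y ys Hg Hgs]; move=> ys' D'; inversion D'; subst => //.
  match goal with H : eval g xs _, H' : evals gs xs _ |- _ =>
    by rewrite (eval_functional _ _ _ Hg _ H) (evals_functional _ _ _ Hgs _ H') end.
Qed.

Lemma machine_on (f : nat -> nat) (P : nat -> bool) :
  computable (fun xs => f (arg 0 xs)) -> computable (fun xs => P (arg 0 xs)) ->
  exists M, forall x y, eval M [:: x] y <-> P x /\ y = f x.
Proof.
move=> [tf Hf] /computable_negb[tP HP]; have [tadd Hadd] := computable_add (computable_arg 0)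
  (computable_arg 1).
have HPx x : eval (Comp tP [:: Proj 1]) [:: 0; x] (~~ P x).
  by apply: (@eComp _ _ _ [:: x]); [constructor; [apply: eProj | constructor] | apply: HP].
(* [Mu] halts, with value 0, exactly when [P x] holds. *)
exists (Comp tadd [:: tf; Mu (Comp tP [:: Proj 1])]) => x y; split.
- move=> /eval_Comp_inv[ys /evals_cons_inv[y1 [ys1 [-> Ey1
    /evals_cons_inv[y2 [ys2 [-> Ey2 /evals_nil_inv ->]]]]]] Ey].
  have [/eval_Comp_inv[zs /evals_cons_inv[z [zs1 [-> /eval_Proj_inv -> /evals_nil_inv ->]]]
    E0] _] := eval_Mu_inv Ey2.
  have := eval_functional (HP [:: x]) E0; rewrite /arg /=; case Px: (P x) => // _.
  split => //; rewrite -(eval_functional (Hadd _) Ey) -(eval_functional (Hf [:: x]) Ey1).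
  case: y2 Ey2 {Ey E0} => [|y2] Ey2; first by rewrite /arg addn0.
  have [_ /(_ 0 (ltn0Sn _))[c /eval_Comp_inv[ws
    /evals_cons_inv[w [ws1 [-> /eval_Proj_inv -> /evals_nil_inv ->]]] E1]]] := eval_Mu_inv Ey2.
  by have := eval_functional (HP [:: x]) E1; rewrite /arg /= Px.
- move=> [Px ->]; apply: (@eComp _ _ _ [:: f x; 0]).
    constructor; first exact: Hf.
    constructor; last constructor.
    apply: eMu => //; have := HPx x; by rewrite Px.
  by have := Hadd [:: f x; 0]; rewrite /arg /= addn0.
Qed.

Lemma prefix_free_on_well_formed M flen (f : nat -> nat) :
  (forall x y, eval M [:: x] y <-> well_formed flen x /\ y = f x) -> prefix_free M.
Proof.
move=> HM p q s s' /HM[wf_p _] /HM[wf_q _] [r E]; subst q.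
by rewrite (well_formed_prefix_free wf_p wf_q) List.app_nil_r.
Qed.

(** * The decoder *)

Section Decoder.
Variables (k N w : nat) (pos : nat -> nat -> nat).
Hypothesis computable_pos : computable (fun xs => pos (arg 0 xs) (arg 1 xs)).

Definition block_base : nat := 2 ^ k - 1.
(* A program [delimited j q] with [size q = out_len j - saving j] has length
   [out_len j - j - 1]. *)
Definition saving (j : nat) : nat := (2 * j).+2.
(* Chosen so that [block_base ^ nblocks j * 2 ^ saving j <= 2 ^ (k * nblocks j)]
   follows from Bernoulli's inequality. *)
Definition nblocks (j : nat) : nat := block_base * (2 ^ saving j - 1).
Definition block_pos (z : nat) : nat := pos (N + z %/ k) (z %% k).
(* A crude computable bound on the positions of the first [nblocks j] blocks. *)
Definition out_len (j : nat) : nat := (\sum_(z < nblocks j * k) block_pos z).+1.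
Definition payload_len (j : nat) : nat := out_len j - saving j.

Definition block_index (G y : nat) : nat := find (fun z => block_pos z == y) (iota 0 (G * k)).
Definition covered (G y : nat) : bool := block_index G y < G * k.
Definition uncovered_below (G y : nat) : nat := \sum_(y' < y) ~~ covered G y'.
Definition unskip (d : nat) : nat := if d < w then d else d.+1.

(* [n] is [D + block_base ^ G * V]: the [G] base-[block_base] digits of [D] are the
   blocks, each with the value [w] skipped; the bits of [V] are those of the output
   outside the blocks, in order. *)
Definition decoded_bit (G n y : nat) : nat :=
  if covered G y then
    let z := block_index G y in
    (unskip (n %% block_base ^ G %/ block_base ^ (z %/ k) %% block_base) %/ 2 ^ (z %% k)) %% 2
  else (n %/ block_base ^ G %/ 2 ^ uncovered_below G y) %% 2.

Definition payload (x : nat) : nat :=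
  payload_code x - (2 ^ payload_len (header_len x) - 1).
Definition dec_bit (x y : nat) : nat := decoded_bit (nblocks (header_len x)) (payload x) y.

Fixpoint dec_bits (s x : nat) : nat :=
  if s is s'.+1 then 2 * dec_bits s' x + 1 + dec_bit x (out_len (header_len x) - s) else 0.
Definition decoder (x : nat) : nat := dec_bits (out_len (header_len x)) x.

Lemma computable_block_pos f : computable f -> computable (fun xs => block_pos (f xs)).
Proof.
move=> Hf; apply: (@computable_comp2 pos (fun xs => N + f xs %/ k) (fun xs => f xs %% k));
  computable_auto.
Qed.

Lemma computable_nblocks f : computable f -> computable (fun xs => nblocks (f xs)).
Proof. by move=> Hf; rewrite /nblocks /saving; computable_auto. Qed.

Lemma computable_out_len f : computable f -> computable (fun xs => out_len (f xs)).
Proof.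
move=> Hf; apply: computable_succ.
apply: (@computable_sum (fun z _ => block_pos z) _ (fun _ => 0)).
- exact: computable_block_pos (computable_arg 0).
- by apply: computable_mul (computable_const k); apply: computable_nblocks.
- exact: computable_const.
Qed.

Lemma computable_payload_len f : computable f -> computable (fun xs => payload_len (f xs)).
Proof.
move=> Hf; apply: computable_sub; first exact: computable_out_len.
by rewrite /saving; computable_auto.
Qed.

Ltac computable_extra ::= first
  [ apply: computable_code_drop | apply: computable_block_pos | apply: computable_nblocks
  | apply: computable_out_len | apply: computable_payload_len
  | apply: computable_header_len | apply: computable_payload_code ].

Lemma computable_block_index f g :
  computable f -> computable g -> computable (fun xs => block_index (f xs) (g xs)).
Proof.
move=> Hf Hg; apply: (@computable_find (fun z y => block_pos z == y)); computable_auto.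
Qed.

Lemma computable_covered f g :
  computable f -> computable g -> computable (fun xs => covered (f xs) (g xs)).
Proof. by move=> Hf Hg; apply: computable_ltn; [apply: computable_block_index|computable_auto]. Qed.

Lemma computable_uncovered_below f g :
  computable f -> computable g -> computable (fun xs => uncovered_below (f xs) (g xs)).
Proof.
move=> Hf Hg; apply: (@computable_sum (fun y G => ~~ covered G y)) => //.
exact/computable_negb/computable_covered/computable_arg/computable_arg.
Qed.

Lemma computable_decoded_bit f g h : computable f -> computable g -> computable h ->
  computable (fun xs => decoded_bit (f xs) (g xs) (h xs)).
Proof.
move=> Hf Hg Hh; have Hi := computable_block_index Hf Hh.
have Hc := computable_covered Hf Hh; have Hu := computable_uncovered_below Hf Hh.
by rewrite /decoded_bit /unskip /block_base; computable_auto.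
Qed.

Lemma computable_dec_bit f g :
  computable f -> computable g -> computable (fun xs => dec_bit (f xs) (g xs)).
Proof.
move=> Hf Hg; apply: computable_decoded_bit => //; first by computable_auto.
by rewrite /payload; computable_auto.
Qed.

Lemma computable_decoder : computable (fun xs => decoder (arg 0 xs)).
Proof.
have Hbits : computable (fun xs => dec_bits (arg 0 xs) (arg 1 xs)).
  apply: (@computable_primrec1 dec_bits (fun _ => 0)
    (fun s r x => 2 * r + 1 + dec_bit x (out_len (header_len x) - s.+1))) => //.
  - exact: computable_const.
  - apply: computable_add; last by apply: computable_dec_bit; computable_auto.
    by computable_auto.
apply: (computable_comp2 Hbits); computable_auto.
Qed.
End Decoder.

(** * Compressing a sequence that avoids a pattern *)

Section SparseDigits.
Variables (B : nat) (sel : pred nat) (d : nat -> nat).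
Hypothesis B_gt0 : 0 < B.

Definition rank (y : nat) : nat := \sum_(z < y) sel z.
Definition sparse_num (n : nat) : nat := \sum_(y < n | sel y) d y * B ^ rank y.

Lemma sparse_numS n :
  sparse_num n.+1 = sparse_num n + (if sel n then d n * B ^ rank n else 0).
Proof. by rewrite /sparse_num big_mkcond big_ord_recr /= -big_mkcond. Qed.

Lemma rankS n : rank n.+1 = rank n + sel n.
Proof. by rewrite /rank big_ord_recr. Qed.

Lemma sparse_num_lt n : (forall y, y < n -> sel y -> d y < B) -> sparse_num n < B ^ rank n.
Proof.
elim: n => [|n IHn] d_lt; first by rewrite /sparse_num big_ord0 expn_gt0 B_gt0.
rewrite sparse_numS rankS; have {}IHn := IHn (fun y lt_y => d_lt y (ltnW lt_y)).
case sel_n: (sel n); last by rewrite !addn0.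
have : d n * B ^ rank n <= (B - 1) * B ^ rank n.
  by rewrite leq_mul2r; apply/orP; right; have := d_lt n (ltnSn n) sel_n; lia.
rewrite addn1 expnS mulnBl mul1n; have := leq_pmull (B ^ rank n) B_gt0.
lia.
Qed.

Lemma sparse_num_split m n : m <= n -> exists R, sparse_num n = sparse_num m + B ^ rank m * R.
Proof.
elim: n => [|n IHn]; first by rewrite leqn0 => /eqP ->; exists 0; rewrite muln0 addn0.
rewrite leq_eqVlt => /orP[/eqP ->|]; first by exists 0; rewrite muln0 addn0.
rewrite ltnS => /[dup] le_mn /IHn[R E]; rewrite sparse_numS E.
case: (sel n); last by exists R; rewrite addn0.
have le_rank : rank m <= rank n.
  by rewrite /rank -(subnKC le_mn) big_split_ord leq_addr.
exists (R + d n * B ^ (rank n - rank m)).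
by rewrite mulnDr -addnA mulnCA -expnD subnKC.
Qed.

Lemma sparse_num_digit n y : (forall y, y < n -> sel y -> d y < B) -> y < n -> sel y ->
  sparse_num n %/ B ^ rank y %% B = d y.
Proof.
move=> d_lt lt_yn sel_y; have [R ->] := sparse_num_split lt_yn.
rewrite sparse_numS rankS sel_y expnD expn1.
have lt_num := sparse_num_lt (fun z lt_z => d_lt z (ltn_trans lt_z lt_yn)).
have pos_B : 0 < B ^ rank y by rewrite expn_gt0 B_gt0.
have -> : sparse_num y + d y * B ^ rank y + B ^ rank y * B * R =
          (d y + R * B) * B ^ rank y + sparse_num y by rewrite mulnDl; lia.
rewrite divnMDl // divn_small // addn0 addnC modnMDl modn_small //.
exact: d_lt.
Qed.
End SparseDigits.

Lemma rank_predT n : rank predT n = n.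
Proof. by rewrite /rank sum_nat_const card_ord muln1. Qed.

Lemma sum_bool_count (P : pred nat) n : \sum_(i < n) P i = count P (iota 0 n).
Proof.
elim: n => [|n IHn]; first by rewrite big_ord0.
by rewrite -[in RHS]addn1 iotaD count_cat big_ord_recr IHn /= addn0.
Qed.

Lemma expn_Bernoulli b n : b ^ n * (b + n) <= (b + 1) ^ n * b.
Proof.
elim: n => [|n IHn]; first by rewrite !expn0 addn0.
rewrite !expnS; have := leq_mul IHn (leqnn (b + 1)).
set u := b ^ n; set v := (b + 1) ^ n; nia.
Qed.

Section Compression.
Variables (k N : nat) (pos : nat -> nat -> nat) (alpha pattern : nat -> bool).
Hypothesis k_gt0 : 0 < k.
Hypothesis pos_inj :
  forall n n' r r', r < k -> r' < k -> pos n r = pos n' r' -> n = n' /\ r = r'.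
Hypothesis avoids : forall t, exists2 r, r < k & alpha (pos (N + t) r) != pattern r.

Local Notation base := (block_base k).
Local Notation covered := (covered k N pos).

Definition bits_num (b : nat -> bool) : nat := sparse_num 2 predT b k.
Definition forbidden : nat := bits_num pattern.
Definition block_val (t : nat) : nat := bits_num (fun r => alpha (pos (N + t) r)).

Lemma bits_num_lt b : bits_num b < 2 ^ k.
Proof. by rewrite -[k in 2 ^ k](rank_predT k); apply: sparse_num_lt => // y _ _; case: (b y). Qed.

Lemma bits_num_bit b r : r < k -> bits_num b %/ 2 ^ r %% 2 = b r.
Proof.
move=> lt_r; rewrite -[r in 2 ^ r]rank_predT sparse_num_digit //.
by move=> y _ _; case: (b y).
Qed.

Lemma block_val_neq t : block_val t != forbidden.
Proof.
have [r lt_r] := avoids t; apply: contra => /eqP E.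
have := bits_num_bit (fun r => alpha (pos (N + t) r)) lt_r.
rewrite -/(block_val t) E bits_num_bit //.
by case: (pattern r); case: (alpha _).
Qed.

Definition skip (v : nat) : nat := if v < forbidden then v else v.-1.

Lemma unskip_skip t : unskip forbidden (skip (block_val t)) = block_val t.
Proof.
have := block_val_neq t; rewrite /unskip /skip.
case: (ltnP (block_val t) forbidden) => [-> //|le_fv /eqP neq].
rewrite ifF; lia.
Qed.

Lemma base_gt0 : 0 < base.
Proof. by rewrite /block_base subn_gt0 -[1]/(2 ^ 0) ltn_exp2l. Qed.

Lemma skip_lt t : skip (block_val t) < base.
Proof.
have := block_val_neq t; have := bits_num_lt pattern.
have := bits_num_lt (fun r => alpha (pos (N + t) r)).
rewrite /skip /block_base -/(block_val t) -/forbidden.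
by case: (ltnP (block_val t) forbidden) => cmp ? ? /eqP ?; lia.
Qed.

Definition blocks_num (G : nat) : nat := sparse_num base predT (fun t => skip (block_val t)) G.
Definition rest_num (G L : nat) : nat := sparse_num 2 (fun y => ~~ covered G y) alpha L.
Definition payload_num (G L : nat) : nat := blocks_num G + base ^ G * rest_num G L.

Lemma blocks_num_lt G : blocks_num G < base ^ G.
Proof.
by rewrite -[G in base ^ G]rank_predT; apply: (sparse_num_lt base_gt0) => t _ _; apply: skip_lt.
Qed.

Lemma rest_num_lt G L : rest_num G L < 2 ^ uncovered_below k N pos G L.
Proof. by apply: sparse_num_lt => // y _ _; case: (alpha y). Qed.

Lemma payload_num_mod G L : payload_num G L %% base ^ G = blocks_num G.
Proof. by rewrite /payload_num addnC mulnC modnMDl modn_small // blocks_num_lt. Qed.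

Lemma payload_num_div G L : payload_num G L %/ base ^ G = rest_num G L.
Proof.
rewrite /payload_num addnC mulnC divnMDl ?expn_gt0 ?base_gt0 //.
by rewrite divn_small ?addn0 // blocks_num_lt.
Qed.

Lemma decoded_bit_payload_num G L y :
  y < L -> decoded_bit k N forbidden pos G (payload_num G L) y = alpha y.
Proof.
move=> lt_yL; rewrite /decoded_bit; case cov_y: (covered G y).
  move: cov_y; rewrite /covered; set z := block_index k N pos G y => lt_z.
  have pos_z : block_pos k N pos z = y.
    have has_y : has (fun z => block_pos k N pos z == y) (iota 0 (G * k)).
      by rewrite has_find size_iota.
    by move: (nth_find 0 has_y); rewrite nth_iota // add0n => /eqP.
  have lt_t : z %/ k < G by rewrite ltn_divLR.
  rewrite payload_num_mod -[z %/ k]rank_predT sparse_num_digit ?base_gt0 //.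
    by rewrite unskip_skip bits_num_bit ?ltn_pmod // -pos_z.
  by move=> t _ _; apply: skip_lt.
rewrite payload_num_div; apply: sparse_num_digit; rewrite ?cov_y //.
by move=> y' _ _; case: (alpha y').
Qed.

Lemma block_pos_inj : injective (block_pos k N pos).
Proof.
move=> z z' /(pos_inj (ltn_pmod z k_gt0) (ltn_pmod z' k_gt0))[/addnI eq_div eq_mod].
by rewrite (divn_eq z k) (divn_eq z' k) eq_div eq_mod.
Qed.

Lemma uncovered_below_add_le G L : (forall z, z < G * k -> block_pos k N pos z < L) ->
  uncovered_below k N pos G L + G * k <= L.
Proof.
move=> pos_lt; rewrite /uncovered_below (sum_bool_count (predC (covered G))).
rewrite -[leqRHS](size_iota 0 L) -(count_predC (covered G)) [leqLHS]addnC leq_add2r.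
rewrite -size_filter -[G * k](size_iota 0) -(size_map (block_pos k N pos)).
apply: uniq_leq_size; first by rewrite map_inj_uniq ?iota_uniq //; apply: block_pos_inj.
move=> y /mapP[z]; rewrite mem_iota add0n => /andP[_ lt_z] ->.
rewrite mem_filter mem_iota add0n pos_lt // andbT /covered /block_index.
rewrite -[X in _ < X](size_iota 0 (G * k)) -has_find.
by rewrite leq0n andbT; apply/hasP; exists z; rewrite ?mem_iota.
Qed.

Lemma block_budget j :
  base ^ nblocks k j * 2 ^ saving j <= 2 ^ (k * nblocks k j).
Proof.
set G := nblocks k j; have := expn_Bernoulli base G.
have -> : base + G = base * 2 ^ saving j.
  rewrite /G /nblocks mulnBr muln1 subnKC //.
  by rewrite leq_pmulr // expn_gt0.
have -> : base + 1 = 2 ^ k by rewrite /block_base subnK // expn_gt0.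
by rewrite mulnA -expnM => budget; rewrite -(leq_pmul2r base_gt0) mulnAC.
Qed.

Lemma block_pos_lt_out_len j z :
  z < nblocks k j * k -> block_pos k N pos z < out_len k N pos j.
Proof. by move=> lt_z; rewrite ltnS (bigD1 (Ordinal lt_z)) //= leq_addr. Qed.

Lemma saving_le_out_len j : saving j <= out_len k N pos j.
Proof.
have := uncovered_below_add_le (block_pos_lt_out_len (j := j)).
have : 2 ^ saving j <= 2 ^ (k * nblocks k j).
  by apply: leq_trans (block_budget j); rewrite leq_pmull // expn_gt0 base_gt0.
by rewrite leq_exp2l // mulnC; lia.
Qed.

Lemma payload_num_lt j :
  payload_num (nblocks k j) (out_len k N pos j) < 2 ^ payload_len k N pos j.
Proof.
set G := nblocks k j; set L := out_len k N pos j; set u := uncovered_below k N pos G L.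
have le_uL : u + G * k <= L := uncovered_below_add_le (block_pos_lt_out_len (j := j)).
have lt_num : payload_num G L < base ^ G * 2 ^ u.
  have := leq_mul (leqnn (base ^ G)) (rest_num_lt G L).
  by rewrite /payload_num mulnS -/u; have := blocks_num_lt G; lia.
apply: (leq_trans lt_num).
rewrite -(leq_pmul2r (expn_gt0 2 (saving j))) -expnD subnK ?saving_le_out_len //.
rewrite mulnAC; apply: leq_trans (leq_mul (block_budget j) (leqnn (2 ^ u))) _.
by rewrite -expnD leq_exp2l // mulnC; lia.
Qed.

Lemma dec_bits_prefix x s : let L := out_len k N pos (header_len x) in
  (forall y, y < L -> dec_bit k N forbidden pos x y = alpha y) -> s <= L ->
  dec_bits k N forbidden pos s x = code [seq alpha y | y <- iota (L - s) s].
Proof.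
move=> L dec_ok; elim: s => [|s IHs] lt_s //=.
rewrite IHs ?(ltnW lt_s) // -/L dec_ok; last lia.
have -> : L - s = (L - s.+1).+1 by lia.
by case: (alpha _); rewrite /= mul2n -addnA.
Qed.

Lemma short_program j : exists p, [/\ size p + j.+1 = out_len k N pos j,
  well_formed (payload_len k N pos) (code p) &
  decoder k N forbidden pos (code p) = code [seq alpha y | y <- iota 0 (out_len k N pos j)]].
Proof.
set G := nblocks k j; set L := out_len k N pos j.
have [q size_q code_q] := code_onto_size (payload_num_lt j).
exists (delimited j q); split.
- rewrite size_cat size_nseq /= size_q /payload_len -/L.
  by have := saving_le_out_len j; rewrite /saving -/L; lia.
- exact: well_formed_delimited.
have payload_q : payload k N pos (code (delimited j q)) = payload_num G L.
  by rewrite /payload payload_code_delimited header_len_delimited code_q addKn.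
rewrite /decoder header_len_delimited -/L dec_bits_prefix ?header_len_delimited ?subnn //.
by move=> y lt_y; rewrite /dec_bit header_len_delimited payload_q decoded_bit_payload_num.
Qed.
End Compression.

Lemma prefixE (alpha : nat -> bool) n : Defs.prefix alpha n = [seq alpha y | y <- iota 0 n].
Proof. by rewrite /Defs.prefix; elim: n 0 => //= n IHn a; rewrite IHn. Qed.

Lemma avoided_pattern_not_KC_complex U k N pos alpha pattern :
  universal_prefix U -> 0 < k -> computable (fun xs => pos (arg 0 xs) (arg 1 xs)) ->
  (forall n n' r r', r < k -> r' < k -> pos n r = pos n' r' -> n = n' /\ r = r') ->
  (forall t, exists2 r, r < k & alpha (pos (N + t) r) != pattern r) ->
  ~ KC_complex U alpha.
Proof.
move=> [_ simulate] k_gt0 Hpos pos_inj avoids [m Hm].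
have [M HM] := machine_on (computable_decoder k N (forbidden k pattern) Hpos)
  (computable_well_formed (computable_payload_len k N Hpos (computable_arg 0))
    (computable_arg 0)).
have [rho Hrho] := simulate M (prefix_free_on_well_formed HM).
have [p [size_p wf_p dec_p]] := short_program k_gt0 pos_inj avoids (size rho + m).
have run_p : runs M p (Defs.prefix alpha (out_len k N pos (size rho + m))).
  by apply/HM; rewrite prefixE dec_p.
by have := Hm _ _ ((Hrho _ _).1 run_p); rewrite size_cat; lia.
Qed.

Lemma In_mem (T : eqType) (x : T) s : List.In x s <-> x \in s.
Proof.
elim: s => [|y s IHs] //=; rewrite in_cons.
by split => [[->|/IHs->] | /orP[/eqP->|/IHs]]; rewrite ?eqxx ?orbT; auto.
Qed.

Definition extension (A : Type) (L : nat -> A -> Prop) (S : A -> A -> Prop)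
  (i : nat) (X Y Z X' Y' : list A) (z : A) : Prop :=
  L i z /\ ~ List.In z Z /\
  (forall x, List.In x X -> S z x) /\ (forall x, List.In x X' -> S x z) /\
  (forall y, List.In y Y -> ~ S z y) /\ (forall y, List.In y Y' -> ~ S y z).

(** * Extensions in the structure [S_alpha] *)

(* [(c, m, out, b)]: the bit of [alpha] at [psi c n m] (an edge from [(c, n)] to [(c + 1, m)],
   when [out]) or at [psi c m n] (an edge from [(c, m)] to [(c + 1, n)]) must be [b]. *)
Definition slot : Type := nat * nat * bool * bool.

Section Extension.
Variables (l : nat) (psi : nat -> nat -> nat -> nat) (alpha : nat -> bool).
Hypothesis psi_inj : forall i n m i' n' m', i < l.-1 -> i' < l.-1 ->
  psi i n m = psi i' n' m' -> [/\ i = i', n = n' & m = m'].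

Definition slot_pos (s : slot) (n : nat) : nat :=
  let: (c, m, out, _) := s in if out then psi c n m else psi c m n.

Variables (i : nat) (X Y Z X' Y' : list (A_l l)).
Hypothesis lt_il : i < l.
Hypotheses (X_above : forall x, List.In x X -> above l (@level l) i x)
  (Y_above : forall y, List.In y Y -> above l (@level l) i y) (XY : disjoint_l X Y)
  (X'_below : forall x, List.In x X' -> below (@level l) i x)
  (Y'_below : forall y, List.In y Y' -> below (@level l) i y) (XY' : disjoint_l X' Y').

Local Notation S := (S_alpha psi alpha).

Definition requirements : seq slot := undup (
  [seq (i, x.2, true, true) | x <- X] ++ [seq (i, y.2, true, false) | y <- Y] ++
  [seq (i.-1, x.2, false, true) | x <- X'] ++ [seq (i.-1, y.2, false, false) | y <- Y']).

Lemma requirement_level c m out b : (c, m, out, b) \in requirements ->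
  [/\ c < l.-1, c = (if out then i else i.-1) & (~~ out -> 0 < i)].
Proof.
rewrite mem_undup !mem_cat => /or4P[] /mapP[x /In_mem x_in [-> _ -> _]].
- by have [lt_i _] := X_above x_in; split => //; lia.
- by have [lt_i _] := Y_above x_in; split => //; lia.
- by move: (X'_below x_in) lt_il; case: (i) => //= i' _ lt_i; split => //; lia.
- by move: (Y'_below x_in) lt_il; case: (i) => //= i' _ lt_i; split => //; lia.
Qed.

Lemma level_eq (x y : A_l l) j : level j x -> level j y -> x.2 = y.2 -> x = y.
Proof.
case: x y => [x1 x2] [y1 y2]; rewrite /level /= => <- eq_y /= ->.
by congr (_, _); apply: val_inj.
Qed.

Lemma requirement_bit c m out b c' b' :
  (c, m, out, b) \in requirements -> (c', m, out, b') \in requirements -> b = b'.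
Proof.
rewrite !mem_undup !mem_cat => /or4P[] /mapP[x /In_mem x_in [_ E1 E2 E3]]
  /or4P[] /mapP[y /In_mem y_in [_ E1' E2' E3']]; subst => //; exfalso.
- have [_ lx] := X_above x_in; have [_ ly] := Y_above y_in.
  by apply: (XY x_in); rewrite (level_eq lx ly E1').
- have [_ lx] := Y_above x_in; have [_ ly] := X_above y_in.
  by apply: (XY y_in); rewrite (level_eq ly lx (esym E1')).
- move: (X'_below x_in) (Y'_below y_in); case: (i) => //= i' lx ly.
  by apply: (XY' x_in); rewrite (level_eq lx ly E1').
- move: (Y'_below x_in) (X'_below y_in); case: (i) => //= i' lx ly.
  by apply: (XY' y_in); rewrite (level_eq ly lx (esym E1')).
Qed.

Lemma slot_pos_inj s s' n n' : s \in requirements -> s' \in requirements ->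
  slot_pos s n = slot_pos s' n' -> s = s' /\ n = n'.
Proof.
case: s s' => [[[c m] out] b] [[[c' m'] out'] b'] s_in s'_in.
have [lt_c c_lvl c_pos] := requirement_level s_in.
have [lt_c' c'_lvl c'_pos] := requirement_level s'_in.
have eq_bit := requirement_bit s_in.
case: out out' s_in s'_in c_lvl c'_lvl c_pos c'_pos eq_bit => [] [] s_in s'_in c_lvl c'_lvl
  c_pos c'_pos eq_bit /(psi_inj lt_c lt_c')[eq_c eq_n eq_m]; subst;
  try by (have := c_pos isT) || (have := c'_pos isT); lia.
- by rewrite (eq_bit _ _ s'_in).
- by rewrite (eq_bit _ _ s'_in).
Qed.

Definition req_pos (n r : nat) : nat := nth 0 [seq slot_pos s n | s <- requirements] r.
Definition req_bit (r : nat) : bool := (nth (0, 0, false, false) requirements r).2.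

Lemma req_pos_inj n n' r r' : r < size requirements -> r' < size requirements ->
  req_pos n r = req_pos n' r' -> n = n' /\ r = r'.
Proof.
move=> lt_r lt_r'; rewrite /req_pos !(nth_map (0, 0, false, false)) //.
move=> /(slot_pos_inj (mem_nth _ lt_r) (mem_nth _ lt_r'))[eq_s ->]; split=> //.
by apply/eqP; rewrite -(nth_uniq (0, 0, false, false) lt_r lt_r' (undup_uniq _)) eq_s.
Qed.

Lemma extension_of_requirements n :
  ~ List.In (@Ordinal l i lt_il, n) Z ->
  (forall r, r < size requirements -> alpha (req_pos n r) = req_bit r) ->
  extension (@level l) S i X Y Z X' Y' (@Ordinal l i lt_il, n).
Proof.
move=> notin_Z meet.
have meet_slot s : s \in requirements -> alpha (slot_pos s n) = s.2.
  move=> s_in; have lt_r : index s requirements < size requirements by rewrite index_mem.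
  by have := meet _ lt_r; rewrite /req_pos /req_bit (nth_map (0, 0, false, false)) // nth_index.
have mem_req x (xs : list (A_l l)) f : List.In x xs -> f x \in [seq f x | x <- xs].
  by move=> /In_mem x_in; apply: map_f.
split; first by []; split; first by []; split; [|split; [|split]].
- move=> x x_in; have [lt_i lvl_x] := X_above x_in.
  have := meet_slot (i, x.2, true, true); rewrite mem_undup mem_cat mem_req //= => /(_ isT).
  by exists i; split; [lia|split].
- move=> x x_in; have [i' E lvl_x] : exists2 i', i = i'.+1 & level i' x.
    by move: (X'_below x_in); case: (i) => [|i'] //; exists i'.
  have := meet_slot (i.-1, x.2, false, true).
  rewrite mem_undup !mem_cat mem_req ?orbT //= => /(_ isT) bit; rewrite E /= in bit.
  by exists i'; split; first lia.
- move=> y y_in [c [_ [/= eq_c [_ bit]]]]; rewrite -eq_c in bit.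
  have := meet_slot (i, y.2, true, false).
  by rewrite mem_undup !mem_cat mem_req ?orbT //= bit => /(_ isT).
- move=> y y_in [c [_ [_ [/= eq_c bit]]]].
  have := meet_slot (i.-1, y.2, false, false).
  by rewrite mem_undup !mem_cat mem_req ?orbT //= eq_c /= bit => /(_ isT).
Qed.

Hypothesis psi_computable :
  exists t, forall c n m, c < l.-1 -> eval t [:: c; n; m] (psi c n m).

Lemma computable_req_pos : computable (fun xs => req_pos (arg 0 xs) (arg 1 xs)).
Proof.
apply: computable_nth_map => -[[[c m] out] b] /requirement_level[lt_c _ _] /=.
have [t Ht] := psi_computable.
have Hargs c0 m0 := computable_cons (computable_const c0)
  (computable_cons (computable_arg 0) (computable_cons (computable_const m0) computable_nil)).
have Hargs' c0 m0 := computable_cons (computable_const c0)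
  (computable_cons (computable_const m0) (computable_cons (computable_arg 0) computable_nil)).
case: out; [have [ts Hts] := Hargs c m | have [ts Hts] := Hargs' c m];
  by exists (Comp t ts) => xs; econstructor; [apply: Hts | apply: Ht].
Qed.

Lemma extension_exists U : universal_prefix U -> KC_complex U alpha ->
  exists z, extension (@level l) S i X Y Z X' Y' z.
Proof.
move=> hU halpha; apply: NNPP => none.
pose N := (\max_(z <- Z) z.2).+1.
have avoids t : exists2 r, r < size requirements & alpha (req_pos (N + t) r) != req_bit r.
  have [/hasP[r]|/hasPn meet] :=
    boolP (has (fun r => alpha (req_pos (N + t) r) != req_bit r) (iota 0 (size requirements))).
    by rewrite mem_iota => /andP[_ lt_r] neq; exists r.
  case: none; exists (Ordinal lt_il, N + t); apply: extension_of_requirements.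
    move=> /In_mem z_in.
    have : N + t <= \max_(z <- Z) z.2 := leq_bigmax_seq (F := fun z => z.2) _ z_in isT.
    by rewrite /N; lia.
  move=> r lt_r; apply/eqP; move: (meet r); rewrite mem_iota lt_r => /(_ isT).
  by rewrite negbK.
have k_gt0 : 0 < size requirements by have [r lt_r _] := avoids 0; lia.
exact: avoided_pattern_not_KC_complex hU k_gt0 computable_req_pos req_pos_inj avoids halpha.
Qed.
End Extension.

Theorem theorem4 (l : nat) (hl : 2 <= l) (psi : nat -> nat -> nat -> nat)
  (hpsi : recursive_bijection3 l psi)
  (U : term) (hU : universal_prefix U)
  (alpha : nat -> bool) (halpha : KC_complex U alpha) :
  @model_T l (A_l l) (@level l) (@S_alpha l psi alpha).
Proof.
have [psi_computable [psi_inj _]] := hpsi.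
split; [|split; [|split]].
- by move=> x; exists x.1.
- by move=> x i j lt_ij _ [Ei Ej]; move: lt_ij; rewrite -Ei -Ej ltnn.
- by move=> x y i [c [_ [Ex [Ey _]]]] Li _; rewrite /level Ey -Ex Li.
move=> i lt_il X Y Z X' Y' X_above Y_above XY _ X'_below Y'_below XY'.
exact: (extension_exists psi_inj Z lt_il X_above Y_above XY X'_below Y'_below XY'
  psi_computable hU halpha).
Qed.
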